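(* Let $H$ and $E$ be Hilbert spaces, let $T:H\to H$ be a bounded linear operator with $\ker T=\{0\}$, and let $\gamma:E\to H$ be a bounded linear operator with $\ker\gamma=\{0\}$ and $\mathcal{R}(T)\cap\mathcal{R}(\gamma)=\{0\}$. Define the linear operator $A$ on $\mathcal{D}(A)=\mathcal{R}(T)\dot+\mathcal{R}(\gamma)$ by $A(Tf+\gamma\varphi)=f$ for $f\in H$, $\varphi\in E$. If $\lambda\in\mathbb{C}$ is such that $I-\lambda T$ is boundedly invertible in $H$, then \[\ker(A-\lambda I)=\mathcal{R}\big((I-\lambda T)^{-1}\gamma\big).\]
   Context: $\mathcal{R}(\cdot)$ denotes the range of an operator and $\dot+$ a direct sum of linear subspaces. The operator $A$ is well defined because of the assumptions $\ker T=\{0\}$, $\ker\gamma=\{0\}$ and $\mathcal{R}(T)\cap\mathcal{R}(\gamma)=\{0\}$. *)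

From HB Require Import structures.
From mathcomp Require Import all_boot all_order all_algebra.
From mathcomp Require Import all_classical all_reals all_analysis.
From mathcomp Require Export complex.
Export numFieldNormedType.Exports.
Set Implicit Arguments. Unset Strict Implicit. Unset Printing Implicit Defensive.
Import Order.TTheory GRing.Theory Num.Theory.
Local Open Scope ring_scope.
Local Open Scope classical_set_scope.

Definition is_hilbert (R : realType) (V : completeNormedModType R[i]) : Prop :=
  exists ip : V -> V -> R[i],
    (forall y (a : R[i]) x1 x2, ip (a *: x1 + x2) y = a * ip x1 y + ip x2 y) /\
    (forall x y, ip y x = (ip x y)^*) /\
    (forall x, ip x x = `|x| ^+ 2).

Definition range_op (U V : Type) (f : U -> V) : set V := [set v | exists u, v = f u].

(* The operator A with D(A) = R(T) +' R(gamma), A (T f + gamma phi) = f,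
   given by its graph: (u, v) is in the graph iff u = T f + gamma phi, v = f. *)
Definition A_graph (R : realType) (H E : completeNormedModType R[i])
  (T : H -> H) (g : E -> H) (u v : H) : Prop :=
  exists (f : H) (phi : E), u = T f + g phi /\ v = f.

Definition ker_A_sub (R : realType) (H E : completeNormedModType R[i])
  (T : H -> H) (g : E -> H) (lambda : R[i]) : set H :=
  [set u | A_graph T g u (lambda *: u)].

(* I - lambda T is boundedly invertible: it has a two-sided inverse which is
   a bounded (= continuous) linear operator. *)
Definition bdd_inverse (R : realType) (H : completeNormedModType R[i])
  (M : H -> H) (S : {linear H -> H}) : Prop :=
  continuous S /\ (forall x, S (M x) = x) /\ (forall x, M (S x) = x).

From HB Require Import structures.
From mathcomp Require Import all_boot all_order all_algebra.
From mathcomp Require Import all_classical all_reals all_analysis.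
From mathcomp Require Import complex.
Import numFieldNormedType.Exports.
Import Order.TTheory GRing.Theory Num.Theory.
Local Open Scope ring_scope.
Local Open Scope classical_set_scope.

(* The identity is purely algebraic: A u = lambda u means u = T (lambda u) + gamma phi,
   i.e. (I - lambda T) u = gamma phi, so the eigenspace is the preimage of R(gamma)
   under I - lambda T, which is the image of R(gamma) under its inverse.  Boundedness,
   the kernel conditions and the Hilbert structure only make A well defined. *)

Lemma preimage_range_op_bij (U V : Type) (M S : V -> V) (f : U -> V) :
  cancel M S -> cancel S M ->
  [set v | range_op f (M v)] = range_op (fun u => S (f u)).
Proof.
move=> MK SK; rewrite eqEsubset; split => v /=.
- by move=> [u fuE]; exists u; rewrite -fuE MK.
- by move=> [u ->]; exists u; rewrite SK.
Qed.

Lemma ker_A_subE (R : realType) (H E : completeNormedModType R[i])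
  (T : {linear H -> H}) (g : E -> H) (lambda : R[i]) :
  ker_A_sub T g lambda = [set u | range_op g (u - lambda *: T u)].
Proof.
rewrite eqEsubset; split => u /=.
- move=> [f [phi [uE fE]]]; exists phi.
  by rewrite -linearZ /= fE {1}uE addrC addKr.
- move=> [phi gphiE]; exists (lambda *: u), phi; split => //.
  by rewrite linearZ /= -gphiE addrC subrK.
Qed.

Theorem lemma1 (R : realType) (H E : completeNormedModType R[i])
  (HH : is_hilbert H) (HE : is_hilbert E)
  (T : {linear H -> H}) (g : {linear E -> H})
  (Tc : continuous T) (gc : continuous g)
  (kerT : forall f, T f = 0 -> f = 0)
  (kerg : forall phi, g phi = 0 -> phi = 0)
  (Rcap : range_op T `&` range_op g = [set 0])
  (lambda : R[i]) (S : {linear H -> H})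
  (HS : bdd_inverse (fun x => x - lambda *: T x) S) :
  ker_A_sub T g lambda = range_op (fun phi => S (g phi)).
Proof.
case: HS => _ [MS SM].
by rewrite ker_A_subE (@preimage_range_op_bij E H _ S g MS SM).
Qed.
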